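(* Let $B$ be the Meissel–Mertens constant. Assume that there exist $a>0$, $r\in\mathbb{Z}_{\geqslant 2}$ and $T_1\geqslant 2$ such that $|\pi(t)-\mathrm{li}(t)|\leqslant\frac{at}{(\log t)^r}$ for all $t\geqslant T_1$, and that there exist $b>0$, $s\in\mathbb{Z}_{\geqslant 1}$ and $T_2\geqslant 2$ such that $\sum_{p\leqslant t}\frac1p\leqslant\log\log t+B+\frac{b}{(\log t)^s}$ for all $t\geqslant T_2$. Set $\mathfrak{m}:=\frac2\pi\left(\sqrt{\pi^2-4}-2\arccos\frac2\pi\right)$. Then for all real $q\geqslant 1$, all $T,x$ with $\max(e^q,T_1,T_2)\leqslant T\leqslant x$, and all $v\in[0,1]$, $$\sum_{p\leqslant x}\frac{|\tau(p;v)|}{p}<2B+\frac{4a\zeta(r)}{(2\pi)^r}+\frac{14a}{(\log T)^r}+\frac{2b}{(\log T)^s}+E,$$ where $E=2\log\log x$ if $0\leqslant v\leqslant\frac{q}{\log x}$; $E=\frac4\pi\log\log x-\left(2-\frac4\pi\right)\log\frac vq+4\mathfrak{m}q^{-1}$ if $\frac{q}{\log x}\leqslant v\leqslant\frac{q}{\log T}$; $E=\frac4\pi\log\log x+\frac4\pi\log\frac vq+2\log\log T+4\mathfrak{m}q^{-1}$ if $\frac{q}{\log T}\leqslant v\leqslant 1$.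
   Context: For $n\in\mathbb{Z}_{\geqslant 1}$ and $v\in\mathbb{R}$, $\tau(n;v):=\sum_{d\mid n}d^{iv}$ (so $\tau(p;v)=1+p^{iv}$ for a prime $p$). Sums over $p$ run over primes; $\pi(t)$ is the prime counting function, $\mathrm{li}$ the logarithmic integral, $\zeta$ the Riemann zeta function, and $B=\lim_{x\to\infty}\left(\sum_{p\leqslant x}\frac1p-\log\log x\right)\approx 0.26149$ the Meissel–Mertens constant. *)

From Stdlib Require Import Reals ZArith Znumtheory Arith.
From Coquelicot Require Import Coquelicot.
Open Scope R_scope.

Definition rfloor (x : R) : Z := (up x - 1)%Z.

Definition prime_sum (f : nat -> R) (x : R) : R :=
  sum_f_R0 (fun n => if prime_dec (Z.of_nat n) then f n else 0)
           (Z.to_nat (rfloor x)).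

Definition prime_pi (t : R) : R := prime_sum (fun _ => 1) t.

(* logarithmic integral, principal value of int_0^t du / log u *)
Definition li (t : R) : R :=
  real (Lim_seq (fun n =>
    RInt (fun u => / ln u) 0 (1 - / INR (n + 2))
    + RInt (fun u => / ln u) (1 + / INR (n + 2)) t)).

Definition zeta (r : nat) : R := Series (fun n => / (INR (n + 1)) ^ r).

Definition MM_B : R :=
  real (Lim_seq (fun n => prime_sum (fun p => / INR p) (INR n) - ln (ln (INR n)))).

(* d^{iv} = exp(i v log d) *)
Definition cpow_i (d : nat) (v : R) : C := (cos (v * ln (INR d)), sin (v * ln (INR d))).

Definition tau (n : nat) (v : R) : C :=
  sum_n (fun d => if (Nat.ltb 0 d && Nat.eqb (n mod d) 0)%bool then cpow_i d v else RtoC 0) n.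

Definition frak_m : R := 2 / PI * (sqrt (PI ^ 2 - 4) - 2 * acos (2 / PI)).

(* For a prime p, |tau(p;v)| = |1 + p^(iv)| = 2 |cos(theta(p))| with theta(t) = v log t / 2.
   Mertens' estimate alone gives the first range.  Otherwise split the sum at
   y = max(T, e^(q/v)), use Mertens below y and partial summation against
   pi(t) = li(t) + O(t / log^r t) above y.  On each interval where theta stays within
   PI/2 of some k PI, 2 |cos theta| / (t log t) is, up to O(1 / (v t log^2 t)), the
   derivative of 4/PI log log t + phi(theta - k PI) / (v log t), where
   phi(w) = 4 sin w - 8 w / PI is bounded by 2 m and vanishes at +-PI/2, so these local
   primitives glue into one.  Hence li contributes 4/PI (log log x - log log y)
   + 4 m / (v log y), while the error term of pi gives boundary terms 4 a / log^r T
   and an integral at most (9/4) a / ((r-1) log^(r-1) T), which is smaller than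
   10 a / log^r T + 4 a zeta(r) / (2 PI)^r. *)

From Stdlib Require Import Reals ZArith Znumtheory Arith Lra Lia.
From Coquelicot Require Import Coquelicot.
Open Scope R_scope.

(** * Prime sums and partial summation *)

Definition floor_nat (x : R) : nat := Z.to_nat (rfloor x).

Definition prime_ind (n : nat) : R := if prime_dec (Z.of_nat n) then 1 else 0.

Lemma floor_nat_spec x : 0 <= x -> INR (floor_nat x) <= x < INR (floor_nat x) + 1.
Proof.
  intros hx. unfold floor_nat, rfloor. destruct (archimed x) as [h1 h2].
  assert (hz : (0 <= up x - 1)%Z).
  { assert (IZR (up x) > 0) as H by lra. apply lt_IZR in H. lia. }
  rewrite INR_IZR_INZ, Z2Nat.id by exact hz. rewrite minus_IZR. lra.
Qed.

Lemma floor_nat_unique x n : INR n <= x < INR n + 1 -> floor_nat x = n.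
Proof.
  intros [h1 h2]. destruct (floor_nat_spec x) as [h3 h4]; [pose proof (pos_INR n); lra|].
  destruct (Nat.lt_trichotomy (floor_nat x) n) as [H|[H|H]]; auto; exfalso.
  - apply (le_INR (S (floor_nat x))) in H. rewrite S_INR in H. lra.
  - apply (le_INR (S n)) in H. rewrite S_INR in H. lra.
Qed.

Lemma floor_nat_INR n : floor_nat (INR n) = n.
Proof. apply floor_nat_unique. lra. Qed.

Lemma floor_nat_le x y : 0 <= x -> x <= y -> (floor_nat x <= floor_nat y)%nat.
Proof.
  intros hx hxy. destruct (floor_nat_spec x hx), (floor_nat_spec y ltac:(lra)).
  destruct (le_lt_dec (floor_nat x) (floor_nat y)) as [|hlt]; auto.
  apply (le_INR (S (floor_nat y))) in hlt. rewrite S_INR in hlt. lra.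
Qed.

Lemma prime_sum_ind f x :
  prime_sum f x = sum_f_R0 (fun n => prime_ind n * f n) (floor_nat x).
Proof.
  apply sum_eq. intros i _. unfold prime_ind. destruct (prime_dec (Z.of_nat i)); ring.
Qed.

Lemma prime_pi_ind x : prime_pi x = sum_f_R0 prime_ind (floor_nat x).
Proof. unfold prime_pi. rewrite prime_sum_ind. apply sum_eq. intros; ring. Qed.

Lemma prime_sum_le f g x : (forall n, prime (Z.of_nat n) -> f n <= g n) ->
  prime_sum f x <= prime_sum g x.
Proof.
  intros H. rewrite !prime_sum_ind. apply sum_Rle. intros n _. unfold prime_ind.
  destruct (prime_dec (Z.of_nat n)) as [hp|]; [rewrite !Rmult_1_l; auto | lra].
Qed.

Lemma prime_sum_ext f g x : (forall n, prime (Z.of_nat n) -> f n = g n) ->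
  prime_sum f x = prime_sum g x.
Proof.
  intros H. apply Rle_antisym; apply prime_sum_le; intros n hn; rewrite H; auto; lra.
Qed.

Lemma prime_sum_scal c f x : prime_sum (fun n => c * f n) x = c * prime_sum f x.
Proof. rewrite !prime_sum_ind, scal_sum. apply sum_eq. intros; ring. Qed.

Lemma sum_f_R0_diff_ext (F G : nat -> R) N M : (N <= M)%nat ->
  (forall n, (N < n <= M)%nat -> F n = G n) ->
  sum_f_R0 F M - sum_f_R0 F N = sum_f_R0 G M - sum_f_R0 G N.
Proof.
  intros h H. induction M.
  - replace N with 0%nat by lia. ring.
  - destruct (Nat.eq_dec N (S M)) as [->|e]; [ring|].
    assert (IH : sum_f_R0 F M - sum_f_R0 F N = sum_f_R0 G M - sum_f_R0 G N)
      by (apply IHM; intros; try apply H; lia).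
    rewrite !tech5, (H (S M)) by lia. lra.
Qed.

Lemma prime_sum_diff_ext f g a b : 0 <= a -> a <= b ->
  (forall n, a < INR n <= b -> f n = g n) ->
  prime_sum f b - prime_sum f a = prime_sum g b - prime_sum g a.
Proof.
  intros ha hab H. rewrite !prime_sum_ind. apply sum_f_R0_diff_ext.
  { apply floor_nat_le; auto. }
  intros n hn. destruct (floor_nat_spec a ha), (floor_nat_spec b ltac:(lra)).
  rewrite H; auto. split.
  - assert (INR (S (floor_nat a)) <= INR n) by (apply le_INR; lia). rewrite S_INR in *. lra.
  - assert (INR n <= INR (floor_nat b)) by (apply le_INR; lia). lra.
Qed.

Section Abel.

Variables G G' : R -> R.
Hypothesis G_der : forall t, 0 < t -> is_derive G t (G' t).
Hypothesis G'_cont : forall t, 0 < t -> continuous G' t.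

Let abel_rhs (a b : R) : R :=
  prime_pi b * G b - prime_pi a * G a
  - (prime_sum (fun n => G (INR n)) b - prime_sum (fun n => G (INR n)) a).

Lemma is_RInt_prime_pi_const a b : 0 < a -> a <= b ->
  (forall t, a < t < b -> prime_pi t = prime_pi a) ->
  is_RInt (fun t => prime_pi t * G' t) a b (prime_pi a * (G b - G a)).
Proof.
  intros ha hab H.
  apply (is_RInt_ext (fun t => scal (prime_pi a) (G' t))).
  { rewrite Rmin_left, Rmax_right by lra. intros t ht. rewrite (H t ht). reflexivity. }
  apply (is_RInt_scal _ _ _ (prime_pi a) (G b - G a)), (is_RInt_derive G); intros t ht;
    rewrite Rmin_left, Rmax_right in ht by lra.
  - apply G_der; lra.
  - apply G'_cont; lra.
Qed.

Lemma abel_same_floor a b : 0 < a -> a <= b -> floor_nat a = floor_nat b ->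
  is_RInt (fun t => prime_pi t * G' t) a b (abel_rhs a b).
Proof.
  intros ha hab hN.
  assert (Hc : forall t, a < t < b -> prime_pi t = prime_pi a).
  { intros t ht. rewrite !prime_pi_ind. f_equal.
    pose proof (floor_nat_le a t ltac:(lra) ltac:(lra)).
    pose proof (floor_nat_le t b ltac:(lra) ltac:(lra)). lia. }
  replace (abel_rhs a b) with (prime_pi a * (G b - G a)).
  { apply is_RInt_prime_pi_const; auto. }
  unfold abel_rhs, prime_sum. fold (floor_nat a) (floor_nat b).
  replace (prime_pi b) with (prime_pi a) by (rewrite !prime_pi_ind, hN; reflexivity).
  rewrite hN. ring.
Qed.

Lemma abel_to_next_int a : 0 < a ->
  is_RInt (fun t => prime_pi t * G' t) a (INR (S (floor_nat a)))
    (abel_rhs a (INR (S (floor_nat a)))).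
Proof.
  intros ha. destruct (floor_nat_spec a ltac:(lra)) as [h1 h2]. rewrite S_INR in *.
  replace (abel_rhs a (INR (floor_nat a) + 1)) with
    (prime_pi a * (G (INR (floor_nat a) + 1) - G a)).
  { apply is_RInt_prime_pi_const; [lra | lra |]. intros t ht.
    rewrite !prime_pi_ind. f_equal. apply floor_nat_unique. lra. }
  unfold abel_rhs. rewrite <- S_INR, !prime_sum_ind, !prime_pi_ind, floor_nat_INR, !tech5.
  ring.
Qed.

Lemma abel_summation a b : 0 < a -> a <= b ->
  is_RInt (fun t => prime_pi t * G' t) a b
    (prime_pi b * G b - prime_pi a * G a
     - (prime_sum (fun n => G (INR n)) b - prime_sum (fun n => G (INR n)) a)).
Proof.
  fold (abel_rhs a b).
  remember (floor_nat b - floor_nat a)%nat as k eqn:Hk. revert a Hk.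
  induction k as [|k IH]; intros a Hk ha hab;
    pose proof (floor_nat_le a b ltac:(lra) hab).
  { apply abel_same_floor; auto. lia. }
  set (m := INR (S (floor_nat a))).
  destruct (floor_nat_spec a ltac:(lra)), (floor_nat_spec b ltac:(lra)).
  assert (ham : a <= m) by (unfold m; rewrite S_INR; lra).
  assert (hmb : m <= INR (floor_nat b)) by (apply le_INR; lia).
  replace (abel_rhs a b) with (plus (abel_rhs a m) (abel_rhs m b))
    by (unfold abel_rhs, plus; simpl; ring).
  apply (is_RInt_Chasles (V := R_NormedModule) _ a m b).
  - apply abel_to_next_int; auto.
  - apply IH; [unfold m; rewrite floor_nat_INR; lia | lra | lra].
Qed.

End Abel.

(** * The logarithmic integral *)

Lemma ln_le_sub_1 x : 0 < x -> ln x <= x - 1.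
Proof.
  intros hx. pose proof (exp_ineq1_le (ln x)). rewrite exp_ln in *; lra.
Qed.

Lemma ln_ge_1_sub_inv x : 0 < x -> 1 - / x <= ln x.
Proof.
  intros hx. pose proof (ln_le_sub_1 (/ x) ltac:(apply Rinv_0_lt_compat; lra)).
  rewrite ln_Rinv in *; lra.
Qed.

Lemma ln_gt_0 x : 1 < x -> 0 < ln x.
Proof. intros h. rewrite <- ln_1. apply ln_increasing; lra. Qed.

Lemma ln_nonpos x : x <= 0 -> ln x = 0.
Proof. intros h. unfold ln. destruct (Rlt_dec 0 x); [exfalso; lra | reflexivity]. Qed.

Lemma div_pow_le c L1 L2 n : 0 <= c -> 1 <= L1 -> L1 <= L2 -> c / L2 ^ n <= c / L1 ^ n.
Proof.
  intros hc h1 h2. apply Rmult_le_compat_l; auto.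
  apply Rinv_le_contravar; [apply pow_lt; lra | apply pow_incr; lra].
Qed.

Lemma exp_le_exp x y : x <= y -> exp x <= exp y.
Proof. intros [h|<-]; [left; apply exp_increasing; lra | lra]. Qed.

Definition inv_ln (u : R) : R := / ln u.

(* [inv_ln 0 = 0] because [ln 0 = 0] and [/ 0 = 0]; this is also the limit at [0+]. *)
Lemma continuous_inv_ln_0 : continuous inv_ln 0.
Proof.
  apply filterlim_locally. intros eps.
  exists (mkposreal (exp (- / eps)) (exp_pos _)). intros y hy.
  change (Rabs (inv_ln y - inv_ln 0) < eps).
  change (Rabs (y - 0) < exp (- / eps)) in hy.
  pose proof (cond_pos eps).
  unfold inv_ln. rewrite (ln_nonpos 0), Rinv_0, Rminus_0_r by lra.
  destruct (Rle_dec y 0) as [hy0|hy0].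
  { rewrite ln_nonpos, Rinv_0, Rabs_R0 by lra. lra. }
  rewrite Rminus_0_r, Rabs_pos_eq in hy by lra.
  assert (hly : ln y < - / eps).
  { rewrite <- (ln_exp (- / eps)). apply ln_increasing; lra. }
  assert (0 < / eps) by (apply Rinv_0_lt_compat; lra).
  rewrite Rabs_left by (apply Rinv_lt_0_compat; lra).
  rewrite <- Rinv_opp, <- (Rinv_inv eps).
  apply Rinv_lt_contravar; nra.
Qed.

Lemma continuous_inv_ln z : 0 <= z -> z <> 1 -> continuous inv_ln z.
Proof.
  intros h0 h1. destruct (Req_dec z 0) as [->|hz]; [apply continuous_inv_ln_0|].
  apply (ex_derive_continuous (V := R_NormedModule)). unfold inv_ln. auto_derive.
  repeat split; try lra. apply ln_neq_0; lra.
Qed.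

Lemma ex_RInt_inv_ln a b :
  (forall z, Rmin a b <= z <= Rmax a b -> 0 <= z /\ z <> 1) -> ex_RInt inv_ln a b.
Proof.
  intros H. apply (ex_RInt_continuous (V := R_CompleteNormedModule)). intros z hz.
  destruct (H z hz). apply continuous_inv_ln; auto.
Qed.

Lemma ex_RInt_inv_ln_gt_1 a b : 1 < a -> 1 < b -> ex_RInt inv_ln a b.
Proof.
  intros ha hb. apply ex_RInt_inv_ln. intros z hz.
  pose proof (Rmin_glb_lt a b 1 ha hb). lra.
Qed.

Lemma ex_RInt_inv_ln_lt_1 a b : 0 <= a < 1 -> 0 <= b < 1 -> ex_RInt inv_ln a b.
Proof.
  intros ha hb. apply ex_RInt_inv_ln. intros z hz.
  pose proof (Rmin_glb a b 0 ltac:(lra) ltac:(lra)).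
  pose proof (Rmax_lub_lt a b 1 ltac:(lra) ltac:(lra)). lra.
Qed.

Definition inv_ln_sym (w : R) : R := inv_ln (1 + w) + inv_ln (1 - w).

(* This boundedness is why the principal value defining [li] exists. *)
Lemma inv_ln_sym_bound w : 0 < w <= / 2 -> Rabs (inv_ln_sym w) <= 2.
Proof.
  intros hw. unfold inv_ln_sym, inv_ln.
  set (A := ln (1 + w)). set (B := ln (1 - w)).
  assert (hA : w / (1 + w) <= A).
  { pose proof (ln_ge_1_sub_inv (1 + w)). unfold A.
    replace (w / (1 + w)) with (1 - / (1 + w)) by (field; lra). lra. }
  assert (hB : B <= - w) by (pose proof (ln_le_sub_1 (1 - w)); unfold B; lra).
  assert (hAB : 0 <= - (A + B) <= w * w / ((1 + w) * (1 - w))).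
  { unfold A, B. rewrite <- ln_mult by lra.
    pose proof (ln_ge_1_sub_inv ((1 + w) * (1 - w)) ltac:(nra)).
    pose proof (ln_le_sub_1 ((1 + w) * (1 - w)) ltac:(nra)).
    replace (w * w / ((1 + w) * (1 - w))) with (- (1 - / ((1 + w) * (1 - w))))
      by (field; lra).
    nra. }
  assert (hwA : 0 < w / (1 + w)) by (apply Rdiv_lt_0_compat; lra).
  assert (hP : w / (1 + w) * w <= A * - B) by (apply Rmult_le_compat; lra).
  assert (hX : w * w / ((1 + w) * (1 - w)) <= 2 * (w / (1 + w) * w)).
  { replace (w * w / ((1 + w) * (1 - w))) with (w / (1 + w) * w * / (1 - w))
      by (field; lra).
    assert (/ (1 - w) <= 2).
    { rewrite <- (Rinv_inv 2). apply Rinv_le_contravar; lra. }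
    assert (0 < w / (1 + w) * w) by nra. nra. }
  replace (/ A + / B) with (- (A + B) / (A * - B)) by (field; lra).
  rewrite Rabs_pos_eq by (apply Rdiv_le_0_compat; nra).
  apply Rmult_le_reg_r with (A * - B); [nra|].
  unfold Rdiv. rewrite Rmult_assoc, Rinv_l by nra. lra.
Qed.

Definition li_cut (n : nat) : R := / INR (n + 2).

Definition li_approx (t : R) (n : nat) : R :=
  RInt inv_ln 0 (1 - li_cut n) + RInt inv_ln (1 + li_cut n) t.

Lemma li_cut_bounds n : 0 < li_cut n <= / 2.
Proof.
  unfold li_cut. rewrite plus_INR. simpl. pose proof (pos_INR n).
  split; [apply Rinv_0_lt_compat | apply Rinv_le_contravar]; lra.
Qed.

Lemma ex_RInt_inv_ln_shift a b : 0 < a < 1 -> 0 < b < 1 ->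
  ex_RInt (fun w => inv_ln (1 + w)) a b /\ ex_RInt (fun w => inv_ln (1 - w)) a b.
Proof.
  intros ha hb.
  assert (H : forall z, Rmin a b <= z <= Rmax a b -> 0 < z < 1).
  { intros z hz. unfold Rmin, Rmax in *. destruct (Rle_dec a b); lra. }
  split; apply (ex_RInt_continuous (V := R_CompleteNormedModule)); intros z hz;
    destruct (H z hz); apply (ex_derive_continuous (V := R_NormedModule));
    unfold inv_ln; auto_derive; repeat split; try lra; apply ln_neq_0; lra.
Qed.

Lemma li_approx_diff n m :
  li_approx 2 n - li_approx 2 m = RInt inv_ln_sym (li_cut n) (li_cut m).
Proof.
  destruct (li_cut_bounds n), (li_cut_bounds m).
  set (en := li_cut n) in *. set (em := li_cut m) in *.
  destruct (ex_RInt_inv_ln_shift en em) as [Ip Im]; try lra.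
  assert (E1 : RInt inv_ln 0 (1 - en)
               = RInt inv_ln 0 (1 - em) + RInt inv_ln (1 - em) (1 - en)).
  { symmetry. apply (RInt_Chasles (V := R_CompleteNormedModule));
      apply ex_RInt_inv_ln_lt_1; lra. }
  assert (E2 : RInt inv_ln (1 + en) 2
               = RInt inv_ln (1 + en) (1 + em) + RInt inv_ln (1 + em) 2).
  { symmetry. apply (RInt_Chasles (V := R_CompleteNormedModule));
      apply ex_RInt_inv_ln_gt_1; lra. }
  assert (E3 : RInt inv_ln (1 + en) (1 + em) = RInt (fun w => inv_ln (1 + w)) en em).
  { replace (1 + en) with (1 * en + 1) by ring. replace (1 + em) with (1 * em + 1) by ring.
    rewrite <- (RInt_comp_lin (V := R_CompleteNormedModule))
      by (apply ex_RInt_inv_ln_gt_1; lra).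
    apply RInt_ext. intros w _. change (1 * inv_ln (1 * w + 1) = inv_ln (1 + w)).
    rewrite !Rmult_1_l, Rplus_comm. reflexivity. }
  assert (E4 : RInt inv_ln (1 - em) (1 - en) = RInt (fun w => inv_ln (1 - w)) en em).
  { replace (1 - en) with (-1 * en + 1) by ring. replace (1 - em) with (-1 * em + 1) by ring.
    rewrite <- (RInt_comp_lin (V := R_CompleteNormedModule))
      by (apply ex_RInt_inv_ln_lt_1; lra).
    rewrite (RInt_ext _ (fun w => opp (inv_ln (1 - w)))).
    2: { intros w _. change (-1 * inv_ln (-1 * w + 1) = - inv_ln (1 - w)).
         replace (-1 * w + 1) with (1 - w) by ring. ring. }
    rewrite (RInt_opp (V := R_CompleteNormedModule)), (opp_RInt_swap (V := R_CompleteNormedModule));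
      try apply ex_RInt_swap; auto. }
  unfold li_approx, inv_ln_sym. fold en em.
  rewrite (RInt_plus (V := R_CompleteNormedModule)) by assumption.
  change (plus ?x ?y) with (x + y). lra.
Qed.

Lemma li_approx_cauchy : ex_finite_lim_seq (li_approx 2).
Proof.
  apply ex_lim_seq_cauchy_corr. intros eps. pose proof (cond_pos eps) as he.
  destruct (archimed (2 / eps)) as [h1 _].
  assert (0 < 2 / eps) by (apply Rdiv_lt_0_compat; lra).
  assert (hz : (0 <= up (2 / eps))%Z) by (apply le_IZR; lra).
  assert (small : forall k, (Z.to_nat (up (2 / eps)) <= k)%nat -> li_cut k < eps / 2).
  { intros k hk. apply le_INR in hk. rewrite INR_IZR_INZ, Z2Nat.id in hk by auto.
    unfold li_cut. rewrite plus_INR. simpl.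
    replace (eps / 2) with (/ (2 / eps)) by (field; lra).
    apply Rinv_lt_contravar; [apply Rmult_lt_0_compat|]; lra. }
  exists (Z.to_nat (up (2 / eps))). intros n m hn hm.
  pose proof (small n hn). pose proof (small m hm).
  destruct (li_cut_bounds n), (li_cut_bounds m).
  destruct (ex_RInt_inv_ln_shift (li_cut n) (li_cut m)) as [Ip Im]; try lra.
  rewrite li_approx_diff.
  apply Rle_lt_trans with (Rabs (li_cut m - li_cut n) * 2).
  - apply (norm_RInt_le_const_abs (V := R_NormedModule) inv_ln_sym).
    + intros w hw. apply inv_ln_sym_bound.
      pose proof (Rmin_glb_lt (li_cut n) (li_cut m) 0). unfold Rmin, Rmax in *.
      destruct (Rle_dec (li_cut n) (li_cut m)); lra.
    + apply (RInt_correct (V := R_CompleteNormedModule)).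
      exact (ex_RInt_plus (V := R_CompleteNormedModule) _ _ _ _ Ip Im).
  - assert (Rabs (li_cut m - li_cut n) < eps / 2) by (apply Rabs_def1; lra). lra.
Qed.

Lemma li_eq t : 1 < t -> li t = li 2 + RInt inv_ln 2 t.
Proof.
  intros ht. destruct li_approx_cauchy as [l hl].
  assert (H : forall n, li_approx t n = li_approx 2 n + RInt inv_ln 2 t).
  { intros n. destruct (li_cut_bounds n). unfold li_approx.
    rewrite <- (RInt_Chasles (V := R_CompleteNormedModule) inv_ln (1 + li_cut n) 2 t)
      by (apply ex_RInt_inv_ln_gt_1; lra).
    change (plus ?x ?y) with (x + y). ring. }
  change (real (Lim_seq (li_approx t)) = real (Lim_seq (li_approx 2)) + RInt inv_ln 2 t).
  rewrite (is_lim_seq_unique _ _ hl), (Lim_seq_ext _ _ H),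
    (is_lim_seq_unique _ (l + RInt inv_ln 2 t)); [reflexivity|].
  apply is_lim_seq_plus'; [exact hl | apply is_lim_seq_const].
Qed.

Lemma is_derive_li t : 1 < t -> is_derive li t (inv_ln t).
Proof.
  intros ht.
  assert (near_t : forall P : R -> Prop, (forall y, 1 < y -> P y) -> locally t P).
  { intros P HP. exists (mkposreal (t - 1) ltac:(lra)). intros y hy.
    apply HP. change (Rabs (y - t) < t - 1) in hy. apply Rabs_def2 in hy. lra. }
  apply (is_derive_ext_loc (fun y => li 2 + RInt inv_ln 2 y)).
  { apply near_t. intros y hy. symmetry. apply li_eq; auto. }
  rewrite <- (Rplus_0_l (inv_ln t)).
  apply (is_derive_plus (K := R_AbsRing) (V := R_NormedModule)).
  { apply (is_derive_const (K := R_AbsRing) (V := R_NormedModule)). }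
  apply (is_derive_RInt (V := R_NormedModule) inv_ln _ 2 t).
  - apply near_t. intros y hy. apply (RInt_correct (V := R_CompleteNormedModule)).
    apply ex_RInt_inv_ln_gt_1; lra.
  - apply continuous_inv_ln; lra.
Qed.

Lemma continuous_li t : 1 < t -> continuous li t.
Proof.
  intros ht. apply (ex_derive_continuous (V := R_NormedModule)).
  eexists. apply is_derive_li; auto.
Qed.

(** * The defect of [|cos|] from its mean *)

Lemma PI_bounds : 8 / 3 <= PI <= 33 / 10.
Proof.
  pose proof (PI_ineq 0) as [H0 _]. pose proof (PI_ineq 4) as [_ H4].
  unfold tg_alt, PI_tg in *. simpl in *. lra.
Qed.

Lemma abs_cos_add_IZR_PI (k : Z) w : Rabs (cos (w + IZR k * PI)) = Rabs (cos w).
Proof.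
  assert (hs : sin (IZR k * PI) = 0) by (apply sin_eq_0_1; eauto).
  assert (hc : Rabs (cos (IZR k * PI)) = 1).
  { pose proof (sin2_cos2 (IZR k * PI)) as H. rewrite hs in H. unfold Rsqr in H.
    destruct (Rle_dec 0 (cos (IZR k * PI))).
    - rewrite Rabs_pos_eq by lra. nra.
    - rewrite Rabs_left by lra. nra. }
  rewrite cos_plus, hs, Rmult_0_r, Rminus_0_r, Rabs_mult, hc. ring.
Qed.

(* A primitive of [4 (cos w - 2/PI)]: [2/PI] is the mean value of [|cos|]. *)
Definition cos_defect (w : R) : R := 4 * sin w - 8 * w / PI.

Lemma cos_defect_opp w : cos_defect (- w) = - cos_defect w.
Proof. unfold cos_defect. rewrite sin_neg. field. pose proof PI_RGT_0; lra. Qed.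

Lemma cos_defect_PI2 : cos_defect (PI / 2) = 0.
Proof. unfold cos_defect. rewrite sin_PI2. field. pose proof PI_RGT_0; lra. Qed.

Lemma MVT_sin a b : a < b -> exists c, sin b - sin a = cos c * (b - a) /\ a < c < b.
Proof. intros h. apply (MVT_cor2 sin cos a b h). intros c _. apply derivable_pt_lim_sin. Qed.

Lemma cos_defect_nonneg w : 0 <= w <= PI / 2 -> 0 <= cos_defect w.
Proof.
  intros hw. pose proof PI_RGT_0. unfold cos_defect.
  destruct (Req_dec w 0) as [->|h0]; [rewrite sin_0; lra|].
  destruct (Req_dec w (PI / 2)) as [->|h1].
  { pose proof cos_defect_PI2. unfold cos_defect in *. lra. }
  destruct (MVT_sin 0 w ltac:(lra)) as [c1 [e1 hc1]].
  destruct (MVT_sin w (PI / 2) ltac:(lra)) as [c2 [e2 hc2]].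
  rewrite sin_0 in e1. rewrite sin_PI2 in e2.
  assert (cos c2 <= cos c1) by (left; apply cos_decreasing_1; lra).
  assert (0 <= cos c2) by (apply cos_ge_0; lra).
  assert (0 <= (cos c1 - cos c2) * (w * (PI / 2 - w))) by (apply Rmult_le_pos; nra).
  assert (sin w * (PI / 2) >= w) by nra.
  assert (8 * w / PI <= 4 * sin w).
  { apply Rmult_le_reg_r with PI; auto. unfold Rdiv. rewrite Rmult_assoc, Rinv_l; lra. }
  lra.
Qed.

Lemma two_div_PI_bounds : 0 < 2 / PI <= 1.
Proof.
  pose proof PI_bounds. split; [apply Rdiv_lt_0_compat; lra|].
  apply Rmult_le_reg_r with PI; [lra|]. unfold Rdiv. rewrite Rmult_assoc, Rinv_l; lra.
Qed.

Lemma acos_2_PI_spec : 0 <= acos (2 / PI) <= PI / 2 /\ cos (acos (2 / PI)) = 2 / PI.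
Proof.
  pose proof PI_bounds.
  pose proof two_div_PI_bounds as h.
  assert (hc : cos (acos (2 / PI)) = 2 / PI) by (apply cos_acos; lra).
  pose proof (acos_bound (2 / PI)). repeat split; try lra.
  destruct (Rle_dec (acos (2 / PI)) (PI / 2)) as [|hgt]; auto.
  pose proof (cos_le_0 (acos (2 / PI))). lra.
Qed.

(* The derivative [4 cos w - 8 / PI] changes sign at [acos (2 / PI)]. *)
Lemma cos_defect_le_max w : 0 <= w <= PI / 2 -> cos_defect w <= cos_defect (acos (2 / PI)).
Proof.
  intros hw. destruct acos_2_PI_spec as [hw0 hc]. pose proof PI_RGT_0.
  set (w0 := acos (2 / PI)) in *. unfold cos_defect.
  assert (e : forall x y, 8 * y / PI - 8 * x / PI = 4 * (2 / PI) * (y - x)) by (intros; field; lra).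
  destruct (Rtotal_order w w0) as [h|[->|h]]; [| lra |].
  - destruct (MVT_sin w w0 h) as [c [E hc']].
    assert (cos w0 <= cos c) by (left; apply cos_decreasing_1; lra).
    pose proof (e w w0). nra.
  - destruct (MVT_sin w0 w h) as [c [E hc']].
    assert (cos c <= cos w0) by (left; apply cos_decreasing_1; lra).
    pose proof (e w0 w). nra.
Qed.

Lemma cos_defect_max_eq : cos_defect (acos (2 / PI)) = 2 * frak_m.
Proof.
  pose proof PI_bounds. destruct acos_2_PI_spec as [_ hc].
  pose proof two_div_PI_bounds as h.
  unfold frak_m, cos_defect. rewrite sin_acos by lra.
  replace (PI ^ 2 - 4) with (PI ^ 2 * (1 - (2 / PI)²)) by (unfold Rsqr; field; lra).
  rewrite sqrt_mult, sqrt_pow2 by (unfold Rsqr; nra).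
  field. lra.
Qed.

Lemma frak_m_nonneg : 0 <= frak_m.
Proof.
  destruct acos_2_PI_spec as [hw0 _]. pose proof (cos_defect_nonneg _ hw0).
  rewrite cos_defect_max_eq in *. lra.
Qed.

Lemma cos_defect_bound w : - PI / 2 <= w <= PI / 2 -> Rabs (cos_defect w) <= 2 * frak_m.
Proof.
  intros hw. rewrite <- cos_defect_max_eq. apply Rabs_le.
  destruct acos_2_PI_spec as [hw0 _]. pose proof (cos_defect_nonneg _ hw0).
  destruct (Rle_dec 0 w).
  - pose proof (cos_defect_nonneg w). pose proof (cos_defect_le_max w). lra.
  - pose proof (cos_defect_nonneg (- w)). pose proof (cos_defect_le_max (- w)).
    rewrite cos_defect_opp in *. lra.
Qed.

Definition half_period_index (th : R) : Z := (up ((th + PI / 2) / PI) - 1)%Z.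

Definition cos_defect_per (th : R) : R :=
  cos_defect (th - IZR (half_period_index th) * PI).

Lemma half_period_index_spec th :
  - PI / 2 <= th - IZR (half_period_index th) * PI < PI / 2.
Proof.
  pose proof PI_RGT_0. unfold half_period_index.
  destruct (archimed ((th + PI / 2) / PI)) as [h1 h2].
  rewrite minus_IZR. set (X := (th + PI / 2) / PI) in *.
  assert (th = X * PI - PI / 2) by (unfold X; field; lra).
  split; nra.
Qed.

(* The closed range is allowed since [cos_defect (+-PI/2) = 0]. *)
Lemma cos_defect_per_eq th k : - PI / 2 <= th - IZR k * PI <= PI / 2 ->
  cos_defect_per th = cos_defect (th - IZR k * PI).
Proof.
  intros h. pose proof PI_RGT_0. unfold cos_defect_per, half_period_index.
  set (X := (th + PI / 2) / PI).
  assert (hX : th = X * PI - PI / 2) by (unfold X; field; lra).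
  destruct (Rlt_dec (th - IZR k * PI) (PI / 2)) as [hl|hl].
  - replace (up X) with (k + 1)%Z by (apply tech_up; rewrite plus_IZR; nra).
    replace (k + 1 - 1)%Z with k by ring. reflexivity.
  - replace (up X) with (k + 2)%Z by (apply tech_up; rewrite plus_IZR; nra).
    replace (th - IZR (k + 2 - 1) * PI) with (- (PI / 2))
      by (replace (k + 2 - 1)%Z with (k + 1)%Z by ring; rewrite plus_IZR; lra).
    replace (th - IZR k * PI) with (PI / 2) by lra.
    rewrite cos_defect_opp, cos_defect_PI2. ring.
Qed.

Lemma cos_defect_per_bound th : Rabs (cos_defect_per th) <= 2 * frak_m.
Proof.
  pose proof (half_period_index_spec th). apply cos_defect_bound. lra.
Qed.

(** * Partial summation of [|tau(p;v)| / p] *)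

Ltac pos_tac :=
  repeat (first [apply Rmult_lt_0_compat | apply pow_lt | apply Rinv_0_lt_compat | lra]).

Section PrimeSumTauWeight.

Variables (v a : R) (r : nat) (T1 : R).
Hypothesis v_pos : 0 < v.
Hypothesis v_le_1 : v <= 1.
Hypothesis a_pos : 0 < a.
Hypothesis T1_ge_2 : 2 <= T1.
Hypothesis pi_li : forall t, T1 <= t -> Rabs (prime_pi t - li t) <= a * t / (ln t) ^ r.

Definition half_angle (t : R) : R := v * ln t / 2.

Definition tau_weight (t : R) : R := 2 * Rabs (cos (half_angle t)) / t.

Definition main_term (t : R) : R :=
  (prime_pi t - li t) * tau_weight t + cos_defect_per (half_angle t) / (v * ln t)
  + 4 / PI * ln (ln t).

(* [9/4 >= sqrt 5] bounds [t^2] times the derivative of [2 cos (half_angle t - k PI) / t]. *)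
Definition error_density (t : R) : R :=
  2 * frak_m / v / (t * ln t ^ 2) + a * (9 / 4) / (t * ln t ^ r).

Definition tau_weight_sum_controlled (al be : R) : Prop :=
  prime_sum (fun n => tau_weight (INR n)) be - prime_sum (fun n => tau_weight (INR n)) al
  <= main_term be - main_term al + RInt error_density al be.

Lemma continuous_error_density t : 1 < t -> continuous error_density t.
Proof.
  intros ht. pose proof (ln_gt_0 t ht).
  apply (ex_derive_continuous (V := R_NormedModule)). unfold error_density. auto_derive.
  repeat split; try lra; apply Rgt_not_eq; pos_tac.
Qed.

Lemma ex_RInt_error_density al be : 1 < al -> 1 < be -> ex_RInt error_density al be.
Proof.
  intros h1 h2. apply (ex_RInt_continuous (V := R_CompleteNormedModule)). intros t ht.
  pose proof (Rmin_glb_lt al be 1 h1 h2). apply continuous_error_density. lra.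
Qed.

Lemma tau_weight_sum_controlled_trans al be ga : 1 < al -> al <= be -> be <= ga ->
  tau_weight_sum_controlled al be -> tau_weight_sum_controlled be ga ->
  tau_weight_sum_controlled al ga.
Proof.
  intros h1 h2 h3 H1 H2. unfold tau_weight_sum_controlled in *.
  rewrite <- (RInt_Chasles (V := R_CompleteNormedModule) error_density al be ga)
    by (apply ex_RInt_error_density; lra).
  change (plus ?x ?y) with (x + y). lra.
Qed.

Section HalfPeriod.

Variable k : Z.

Definition shifted_angle (t : R) : R := half_angle t - IZR k * PI.

Let G (t : R) : R := 2 * cos (shifted_angle t) / t.
Let G' (t : R) : R := (- v * sin (shifted_angle t) - 2 * cos (shifted_angle t)) / t ^ 2.
Let defect (t : R) : R := cos_defect (shifted_angle t) / v.
Let rest (t : R) : R := defect t / ln t + 4 / PI * ln (ln t).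

Lemma shifted_angle_le t1 t2 : 0 < t1 -> t1 <= t2 -> shifted_angle t1 <= shifted_angle t2.
Proof.
  intros h1 h2. unfold shifted_angle, half_angle.
  pose proof (ln_le t1 t2 h1 h2). nra.
Qed.

Lemma is_derive_G t : 0 < t -> is_derive G t (G' t).
Proof.
  intros ht. unfold G, G', shifted_angle, half_angle. auto_derive.
  - repeat split; lra.
  - unfold Rminus, Rdiv. field. lra.
Qed.

Lemma continuous_G' t : 0 < t -> continuous G' t.
Proof.
  intros ht. apply (ex_derive_continuous (V := R_NormedModule)).
  unfold G', shifted_angle, half_angle. auto_derive.
  repeat split; try lra; apply Rgt_not_eq; pos_tac.
Qed.

Lemma abs_G'_le t : 0 < t -> Rabs (G' t) <= 9 / 4 / t ^ 2.
Proof.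
  intros ht. unfold G', Rdiv. rewrite Rabs_mult, (Rabs_pos_eq (/ t ^ 2)) by (left; pos_tac).
  apply Rmult_le_compat_r; [left; pos_tac|].
  set (s := sin (shifted_angle t)). set (c := cos (shifted_angle t)).
  assert (hsc : s * s + c * c = 1)
    by (unfold s, c; pose proof (sin2_cos2 (shifted_angle t)); unfold Rsqr in *; lra).
  assert (hsq : (- v * s - 2 * c) * (- v * s - 2 * c) <= 5).
  { assert (e : (- v * s - 2 * c) * (- v * s - 2 * c) + (2 * s - v * c) * (2 * s - v * c)
                = (v * v + 4) * (s * s + c * c)) by ring.
    pose proof (Rle_0_sqr (2 * s - v * c)). unfold Rsqr in *. nra. }
  apply Rabs_le. split; nra.
Qed.

Lemma is_derive_rest t : 1 < t ->
  is_derive rest t (2 * cos (shifted_angle t) / (t * ln t) - defect t / (t * (ln t) ^ 2)).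
Proof.
  intros ht. pose proof (ln_gt_0 t ht). pose proof PI_RGT_0.
  unfold rest, defect, cos_defect, shifted_angle, half_angle. auto_derive.
  - repeat split; lra.
  - unfold Rminus, Rdiv. field. repeat split; lra.
Qed.

Lemma is_derive_li_G_sub_rest t : 1 < t ->
  is_derive (fun t => li t * G t - rest t) t (li t * G' t + defect t / (t * ln t ^ 2)).
Proof.
  intros ht. pose proof (ln_gt_0 t ht).
  replace (li t * G' t + defect t / (t * ln t ^ 2)) with
    (minus (plus (mult (inv_ln t) (G t)) (mult (li t) (G' t)))
       (2 * cos (shifted_angle t) / (t * ln t) - defect t / (t * ln t ^ 2)))
    by (unfold minus, plus, mult, opp, G, inv_ln; simpl; field; lra).
  apply (is_derive_minus (fun t => li t * G t) rest).
  - apply (is_derive_mult li G); [apply is_derive_li | apply is_derive_G | exact Rmult_comm]; lra.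
  - apply is_derive_rest; lra.
Qed.

Lemma continuous_li_G'_defect t : 1 < t ->
  continuous (fun t => li t * G' t + defect t / (t * ln t ^ 2)) t.
Proof.
  intros ht. pose proof (ln_gt_0 t ht).
  apply (continuous_plus (fun t => li t * G' t) (fun t => defect t / (t * ln t ^ 2))).
  - apply (continuous_mult li G'); [apply continuous_li | apply continuous_G']; lra.
  - apply (ex_derive_continuous (V := R_NormedModule)).
    unfold defect, cos_defect, shifted_angle, half_angle. auto_derive.
    repeat split; try lra; apply Rgt_not_eq; pos_tac.
Qed.

Lemma half_period_integrand_le t : T1 <= t -> - PI / 2 <= shifted_angle t <= PI / 2 ->
  li t * G' t + defect t / (t * ln t ^ 2) - prime_pi t * G' t <= error_density t.
Proof.
  intros ht hw. pose proof (ln_gt_0 t ltac:(lra)) as hl.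
  assert (Hdef : defect t / (t * ln t ^ 2) <= 2 * frak_m / v / (t * ln t ^ 2)).
  { unfold Rdiv. apply Rmult_le_compat_r; [left; pos_tac|].
    unfold defect, Rdiv. apply Rmult_le_compat_r; [left; pos_tac|].
    pose proof (cos_defect_bound _ hw) as hb. apply Rabs_le_between in hb. lra. }
  assert (Herr : - ((prime_pi t - li t) * G' t) <= a * (9 / 4) / (t * ln t ^ r)).
  { eapply Rle_trans; [apply Rle_abs|]. rewrite Rabs_Ropp, Rabs_mult.
    eapply Rle_trans.
    { apply Rmult_le_compat; try apply Rabs_pos; [apply pi_li | apply abs_G'_le]; lra. }
    right. field. split; [apply pow_nonzero|]; lra. }
  unfold error_density. lra.
Qed.

Lemma tau_weight_sum_controlled_half_period al be : T1 <= al -> al <= be ->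
  - PI / 2 <= shifted_angle al -> shifted_angle be <= PI / 2 ->
  tau_weight_sum_controlled al be.
Proof.
  intros h1 h2 h3 h4.
  assert (hw : forall t, al <= t <= be -> - PI / 2 <= shifted_angle t <= PI / 2).
  { intros t ht. pose proof (shifted_angle_le al t ltac:(lra) ltac:(lra)).
    pose proof (shifted_angle_le t be ltac:(lra) ltac:(lra)). lra. }
  assert (hG : forall t, al <= t <= be -> tau_weight t = G t).
  { intros t ht. unfold tau_weight, G. do 2 f_equal.
    replace (half_angle t) with (shifted_angle t + IZR k * PI) by (unfold shifted_angle; ring).
    rewrite abs_cos_add_IZR_PI. apply Rabs_pos_eq, cos_ge_0; apply hw in ht; lra. }
  assert (hM : forall t, al <= t <= be -> main_term t = (prime_pi t - li t) * G t + rest t).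
  { intros t ht. pose proof (ln_gt_0 t ltac:(lra)). unfold main_term, rest, defect.
    rewrite (hG t ht), (cos_defect_per_eq _ k) by (apply hw in ht; unfold shifted_angle in *; lra).
    fold (shifted_angle t). pose proof PI_RGT_0. field. repeat split; lra. }
  pose proof (abel_summation G G' is_derive_G continuous_G' al be ltac:(lra) h2) as HA.
  assert (HQ : is_RInt (fun t => li t * G' t + defect t / (t * ln t ^ 2)) al be
                 ((li be * G be - rest be) - (li al * G al - rest al))).
  { apply (is_RInt_derive (V := R_CompleteNormedModule) (fun t => li t * G t - rest t));
      intros t ht; rewrite Rmin_left, Rmax_right in ht by lra;
      [apply is_derive_li_G_sub_rest | apply continuous_li_G'_defect]; lra. }
  assert (Hle := is_RInt_le _ _ _ _ _ _ h2
    (is_RInt_minus (V := R_NormedModule) _ _ _ _ _ _ HQ HA)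
    (RInt_correct _ _ _ (ex_RInt_error_density al be ltac:(lra) ltac:(lra)))).
  unfold tau_weight_sum_controlled.
  rewrite (prime_sum_diff_ext _ (fun n => G (INR n)) al be), (hM al), (hM be)
    by (try intros; try apply hG; lra).
  assert (Hint : forall t, al < t < be ->
    minus (li t * G' t + defect t / (t * ln t ^ 2)) (prime_pi t * G' t) <= error_density t)
    by (intros t ht; apply half_period_integrand_le; [| apply hw]; lra).
  specialize (Hle Hint). change (minus ?x ?y) with (x - y) in Hle. lra.
Qed.

End HalfPeriod.

Lemma half_angle_exp X : half_angle (exp (2 * X / v)) = X.
Proof. unfold half_angle. rewrite ln_exp. field. lra. Qed.

Lemma le_of_half_angle_le t1 t2 : 0 < t1 -> 0 < t2 ->
  half_angle t1 <= half_angle t2 -> t1 <= t2.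
Proof.
  intros h1 h2 h. destruct (Rle_lt_dec t1 t2) as [|hlt]; auto.
  pose proof (ln_increasing t2 t1 h2 hlt). unfold half_angle in h. nra.
Qed.

Lemma tau_weight_sum_controlled_periods al (n : nat) be : T1 <= al -> al <= be ->
  shifted_angle (half_period_index (half_angle al)) be <= PI / 2 + INR n * PI ->
  tau_weight_sum_controlled al be.
Proof.
  set (k0 := half_period_index (half_angle al)). intros h1.
  pose proof (half_period_index_spec (half_angle al)) as hk0. fold k0 in hk0.
  pose proof PI_RGT_0. revert be.
  induction n as [|n IH]; intros be h2 hbe.
  { apply (tau_weight_sum_controlled_half_period k0); unfold shifted_angle in *; simpl in *; lra. }
  destruct (Rle_dec (shifted_angle k0 be) (PI / 2 + INR n * PI)) as [hle|hgt]; auto.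
  set (X := PI / 2 + (IZR k0 + INR n) * PI).
  set (z := exp (2 * X / v)).
  assert (hz : half_angle z = X) by apply half_angle_exp.
  pose proof (exp_pos (2 * X / v)) as hz0. fold z in hz0. pose proof (pos_INR n).
  unfold shifted_angle in *. rewrite S_INR in hbe.
  assert (hal : al <= z) by (apply le_of_half_angle_le; unfold X in *; nra).
  assert (hzb : z <= be) by (apply le_of_half_angle_le; unfold X in *; lra).
  apply tau_weight_sum_controlled_trans with z; try lra.
  - apply IH; auto. rewrite hz. unfold X. lra.
  - apply (tau_weight_sum_controlled_half_period (k0 + Z.of_nat n + 1)); try lra;
      unfold shifted_angle; rewrite ?hz, !plus_IZR, <- INR_IZR_INZ; unfold X; lra.
Qed.

Lemma tau_weight_sum_controlled_all al be : T1 <= al -> al <= be ->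
  tau_weight_sum_controlled al be.
Proof.
  intros h1 h2. pose proof PI_RGT_0.
  set (w := shifted_angle (half_period_index (half_angle al)) be).
  destruct (archimed (w / PI)) as [hup _].
  apply (tau_weight_sum_controlled_periods al (Z.to_nat (up (w / PI))) be h1 h2). fold w.
  assert (hw : w / PI * PI = w) by (field; lra).
  destruct (Z_le_gt_dec 0 (up (w / PI))) as [hz|hz].
  - rewrite INR_IZR_INZ, Z2Nat.id by auto. nra.
  - replace (Z.to_nat (up (w / PI))) with 0%nat by lia. apply Z.gt_lt, IZR_lt in hz.
    simpl. nra.
Qed.

Hypothesis r_ge_2 : (2 <= r)%nat.

Definition error_primitive (t : R) : R :=
  - (2 * frak_m / v) / ln t - a * (9 / 4) / (INR (r - 1) * (ln t) ^ (r - 1)).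

Lemma RInt_error_density y x : 1 < y -> y <= x ->
  RInt error_density y x = error_primitive x - error_primitive y.
Proof.
  intros hy hyx. apply is_RInt_unique.
  apply (is_RInt_derive (V := R_CompleteNormedModule) error_primitive error_density);
    intros t ht; rewrite Rmin_left, Rmax_right in ht by lra;
    pose proof (ln_gt_0 t ltac:(lra)).
  - unfold error_primitive, error_density.
    destruct r as [|[|m]]; try lia. replace (S (S m) - 1)%nat with (S m) by lia.
    assert (0 < INR (S m)) by (apply lt_0_INR; lia).
    auto_derive;
      change (match m with 0%nat => 1 | S _ => INR m + 1 end) with (INR (S m)) in *.
    + repeat split; try lra; apply Rgt_not_eq; pos_tac.
    + simpl pow. field. repeat split; try lra; apply Rgt_not_eq; pos_tac.
  - apply continuous_error_density. lra.
Qed.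

Lemma tau_weight_bounds t : 0 < t -> 0 <= tau_weight t <= 2 / t.
Proof.
  intros ht. unfold tau_weight. pose proof (Rabs_pos (cos (half_angle t))).
  assert (Rabs (cos (half_angle t)) <= 1) by (apply Rabs_le, COS_bound).
  split; [apply Rdiv_le_0_compat | apply Rmult_le_compat_r; [left; pos_tac|]]; lra.
Qed.

Lemma abs_pi_li_tau_weight_le T t : T1 <= T -> 1 <= ln T -> T <= t ->
  Rabs ((prime_pi t - li t) * tau_weight t) <= 2 * a / (ln T) ^ r.
Proof.
  intros h1 h2 h3. assert (ht : 0 < t) by lra.
  pose proof (ln_le T t ltac:(lra) h3).
  destruct (tau_weight_bounds t ht).
  rewrite Rabs_mult, (Rabs_pos_eq (tau_weight t)) by auto.
  apply Rle_trans with (a * t / ln t ^ r * (2 / t)).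
  { apply Rmult_le_compat; auto using Rabs_pos; apply pi_li; lra. }
  replace (a * t / ln t ^ r * (2 / t)) with (2 * a / ln t ^ r)
    by (field; split; try apply pow_nonzero; lra).
  apply div_pow_le; lra.
Qed.

Lemma error_primitive_diff_le T y x : T1 <= T -> 1 <= ln T -> T <= y -> y <= x ->
  error_primitive x - error_primitive y
  <= 2 * frak_m / v / ln y - 2 * frak_m / v / ln x
     + a * (9 / 4) / (INR (r - 1) * (ln T) ^ (r - 1)).
Proof.
  intros h0 h1 h2 h3.
  pose proof (ln_le T y ltac:(lra) h2). pose proof (ln_le y x ltac:(lra) h3).
  assert (0 < INR (r - 1)) by (apply lt_0_INR; lia).
  assert (0 <= a * (9 / 4) / (INR (r - 1) * ln x ^ (r - 1)))
    by (apply Rdiv_le_0_compat; [|pos_tac]; lra).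
  unfold error_primitive.
  assert (a * (9 / 4) / (INR (r - 1) * ln y ^ (r - 1))
          <= a * (9 / 4) / (INR (r - 1) * ln T ^ (r - 1))).
  { unfold Rdiv. rewrite !Rinv_mult, <- !Rmult_assoc.
    apply Rmult_le_compat_l; [left; pos_tac|]. apply Rinv_le_contravar; [pos_tac|].
    apply pow_incr. lra. }
  unfold Rdiv at 1 3. lra.
Qed.

Lemma cos_defect_per_div_le t : 1 < t ->
  Rabs (cos_defect_per (half_angle t) / (v * ln t)) <= 2 * frak_m / v / ln t.
Proof.
  intros ht. pose proof (ln_gt_0 t ht).
  replace (2 * frak_m / v / ln t) with (2 * frak_m / (v * ln t)) by (field; lra).
  unfold Rdiv. rewrite Rabs_mult, (Rabs_pos_eq (/ (v * ln t))) by (left; pos_tac).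
  apply Rmult_le_compat_r; [left; pos_tac | apply cos_defect_per_bound].
Qed.

(* The boundary terms [cos_defect_per / (v ln x)] of [main_term x] and of [error_primitive x]
   cancel; only those at [y] survive. *)
Lemma tau_weight_sum_tail_le T y x : T1 <= T -> 1 <= ln T -> T <= y -> y <= x ->
  prime_sum (fun n => tau_weight (INR n)) x - prime_sum (fun n => tau_weight (INR n)) y
  <= 4 / PI * (ln (ln x) - ln (ln y)) + 4 * frak_m / (v * ln y)
     + 4 * a / (ln T) ^ r + a * (9 / 4) / (INR (r - 1) * (ln T) ^ (r - 1)).
Proof.
  intros h1 h2 h3 h4.
  pose proof (ln_le T y ltac:(lra) h3). pose proof (ln_le y x ltac:(lra) h4).
  pose proof (tau_weight_sum_controlled_all y x ltac:(lra) h4) as HC.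
  unfold tau_weight_sum_controlled, main_term in HC. rewrite RInt_error_density in HC by lra.
  pose proof (error_primitive_diff_le T y x h1 h2 h3 h4).
  pose proof (abs_pi_li_tau_weight_le T x h1 h2 ltac:(lra)) as Ex.
  pose proof (abs_pi_li_tau_weight_le T y h1 h2 h3) as Ey.
  pose proof (cos_defect_per_div_le x ltac:(lra)) as Hx.
  pose proof (cos_defect_per_div_le y ltac:(lra)) as Hy.
  apply Rabs_le_between in Ex, Ey, Hx, Hy.
  replace (4 * frak_m / (v * ln y)) with (2 * (2 * frak_m / v / ln y)) by (field; lra).
  replace (4 * a / ln T ^ r) with (2 * (2 * a / ln T ^ r))
    by (field; apply pow_nonzero; lra).
  lra.
Qed.

End PrimeSumTauWeight.

(** * Numerical bounds *)

Lemma zeta_term_le (r n : nat) : (2 <= r)%nat ->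
  0 <= / INR (n + 1) ^ r <= 2 * (/ INR (n + 1) - / INR (n + 2)).
Proof.
  intros hr. rewrite !plus_INR. simpl. pose proof (pos_INR n).
  assert (h : (INR n + 1) ^ 2 <= (INR n + 1) ^ r) by (apply Rle_pow; lra || lia).
  split; [left; apply Rinv_0_lt_compat, pow_lt; lra|].
  apply Rle_trans with (/ (INR n + 1) ^ 2).
  { apply Rinv_le_contravar; [apply pow_lt; lra | exact h]. }
  replace (2 * (/ (INR n + 1) - / (INR n + (1 + 1))))
    with (/ (INR n + 1) ^ 2 + INR n / ((INR n + 1) ^ 2 * (INR n + 2))) by (field; lra).
  assert (0 <= INR n / ((INR n + 1) ^ 2 * (INR n + 2)))
    by (apply Rdiv_le_0_compat; [lra | apply Rmult_lt_0_compat; [apply pow_lt|]; lra]).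
  lra.
Qed.

Lemma is_series_telescope : is_series (fun n => / INR (n + 1) - / INR (n + 2)) 1.
Proof.
  assert (hsum : forall N, sum_n (fun n => / INR (n + 1) - / INR (n + 2)) N = 1 - / INR (N + 2)).
  { induction N as [|N IH].
    - rewrite sum_O. simpl. field.
    - rewrite sum_Sn, IH. change (plus ?x ?y) with (x + y).
      replace (S N + 1)%nat with (N + 2)%nat by lia.
      match goal with |- ?x = ?y => change (@eq R x y) end. ring. }
  assert (H : is_lim_seq (fun N => 1 - / INR (N + 2)) 1).
  2: { apply (is_lim_seq_ext _ _ _ (fun N => eq_sym (hsum N))) in H. exact H. }
  replace (Finite 1) with (Rbar_minus 1 0) by (simpl; f_equal; ring).
  apply (is_lim_seq_minus' (fun _ => 1) (fun N => / INR (N + 2)) 1 0).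
  { apply is_lim_seq_const. }
  apply (is_lim_seq_incr_n (fun N => / INR N) 2 0).
  replace (Finite 0) with (Rbar_inv p_infty) by reflexivity.
  apply is_lim_seq_inv; [apply is_lim_seq_INR | discriminate].
Qed.

Lemma ex_series_zeta r : (2 <= r)%nat -> ex_series (fun n => / INR (n + 1) ^ r).
Proof.
  intros hr.
  apply (ex_series_le (V := R_CompleteNormedModule) _
           (fun n => 2 * (/ INR (n + 1) - / INR (n + 2)))).
  - intros n. change (norm ?x) with (Rabs x). destruct (zeta_term_le r n hr).
    rewrite Rabs_pos_eq; auto.
  - apply (ex_series_scal_l (V := R_CompleteNormedModule)). eexists. apply is_series_telescope.
Qed.

Lemma zeta_ge_partial_sum r N : (2 <= r)%nat ->
  sum_f_R0 (fun n => / INR (n + 1) ^ r) N <= zeta r.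
Proof.
  intros hr. unfold zeta. rewrite (Series_incr_n _ (S N)) by (lia || apply ex_series_zeta; auto).
  simpl pred.
  assert (0 <= Series (fun k => / INR (S N + k + 1) ^ r)).
  { assert (e : Series (fun k => 0 * / INR (S N + k + 1) ^ r) = 0)
      by (rewrite Series_scal_l; ring).
    rewrite <- e. apply Series_le.
    - intros n. pose proof (zeta_term_le r (S N + n) hr). lra.
    - apply (ex_series_incr_n (fun n => / INR (n + 1) ^ r) (S N)). apply ex_series_zeta; auto. }
  lra.
Qed.

Lemma zeta_ge_1 r : (2 <= r)%nat -> 1 <= zeta r.
Proof.
  intros hr. pose proof (zeta_ge_partial_sum r 0 hr) as H. simpl in H.
  rewrite pow1, Rinv_1 in H. lra.
Qed.

Lemma zeta_2_ge : 146 / 100 <= zeta 2.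
Proof. pose proof (zeta_ge_partial_sum 2 4 ltac:(lia)). simpl in *. lra. Qed.

Lemma linear_lt_zeta_pow (r : nat) (L Z : R) : (2 <= r)%nat -> 1 <= L -> 1 <= Z ->
  (r = 2%nat -> 146 / 100 <= Z) ->
  9 / 4 * L / INR (r - 1) < 10 + 4 * Z * (L / (2 * PI)) ^ r.
Proof.
  intros hr hL hZ hZ2. pose proof PI_bounds.
  set (X := L / (2 * PI)).
  assert (hX0 : 0 < X) by (unfold X; apply Rdiv_lt_0_compat; lra).
  assert (hLX : L <= 66 / 10 * X) by (unfold X; apply Rmult_le_reg_r with (2 * PI); [lra|];
    replace (66 / 10 * (L / (2 * PI)) * (2 * PI)) with (66 / 10 * L) by (field; lra); nra).
  clearbody X.
  destruct r as [|[|[|[|r']]]]; try lia.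
  - specialize (hZ2 eq_refl). simpl. unfold Rdiv at 1. rewrite Rinv_1.
    assert (146 / 100 * (X * X) <= Z * (X * X)) by (apply Rmult_le_compat_r; nra).
    pose proof (Rle_0_sqr (X - 127 / 100)). unfold Rsqr in *. nra.
  - replace (INR (3 - 1)) with 2 by (simpl; ring).
    assert (0 < X * X * X) by (repeat apply Rmult_lt_0_compat; lra).
    assert (X * X * X <= Z * (X * X * X)) by nra.
    pose proof (Rle_0_sqr (X - 8 / 10)). pose proof (Rle_0_sqr (X - 78 / 100)).
    unfold Rsqr in *. simpl. nra.
  - replace (S (S (S (S r'))) - 1)%nat with (S (S (S r'))) by lia.
    assert (hI : 3 <= INR (S (S (S r')))) by (rewrite !S_INR; pose proof (pos_INR r'); lra).
    assert (hq : 9 / 4 * L / INR (S (S (S r'))) <= 3 / 4 * L).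
    { apply Rmult_le_reg_r with (INR (S (S (S r')))); [lra|].
      unfold Rdiv. rewrite Rmult_assoc, Rinv_l by lra. nra. }
    assert (hY : 0 <= X ^ S (S (S (S r')))) by (apply pow_le; lra).
    destruct (Rle_dec L 13) as [|hL13]; [nra|].
    assert (hX1 : 1 <= X) by nra.
    assert (X ^ 4 <= X ^ S (S (S (S r')))) by (apply Rle_pow; auto; lia).
    assert (X * X >= 3) by nra.
    assert (X ^ 4 >= 3 * X) by (replace (X ^ 4) with (X * X * (X * X)) by ring; nra).
    set (Y := X ^ S (S (S (S r')))) in *.
    assert (Y <= Z * Y) by nra.
    lra.
Qed.

Lemma boundary_terms_lt (a L : R) (r : nat) : 0 < a -> 1 <= L -> (2 <= r)%nat ->
  4 * a / L ^ r + a * (9 / 4) / (INR (r - 1) * L ^ (r - 1))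
  < 14 * a / L ^ r + 4 * a * zeta r / (2 * PI) ^ r.
Proof.
  intros ha hL hr. pose proof PI_RGT_0.
  pose proof (linear_lt_zeta_pow r L (zeta r) hr hL (zeta_ge_1 r hr)
                ltac:(intros ->; apply zeta_2_ge)) as Hlin.
  destruct r as [|m]; [lia|]. replace (S m - 1)%nat with m in * by lia.
  assert (0 < INR m) by (apply lt_0_INR; lia).
  assert (0 < L ^ m) by (apply pow_lt; lra).
  assert (0 < (2 * PI) ^ m) by (apply pow_lt; lra).
  replace ((L / (2 * PI)) ^ S m) with (L ^ S m / (2 * PI) ^ S m) in Hlin
    by (unfold Rdiv; rewrite <- pow_inv; symmetry; apply Rpow_mult_distr).
  simpl pow in *.
  apply (Rmult_lt_compat_l (a / (L * L ^ m))) in Hlin; [|apply Rdiv_lt_0_compat; nra].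
  replace (a / (L * L ^ m) * (9 / 4 * L / INR m)) with (a * (9 / 4) / (INR m * L ^ m)) in Hlin
    by (field; lra).
  replace (a / (L * L ^ m) * (10 + 4 * zeta (S m) * (L * L ^ m / (2 * PI * (2 * PI) ^ m))))
    with (10 * a / (L * L ^ m) + 4 * a * zeta (S m) / (2 * PI * (2 * PI) ^ m)) in Hlin
    by (field; lra).
  replace (14 * a / (L * L ^ m)) with (4 * a / (L * L ^ m) + 10 * a / (L * L ^ m))
    by (field; nra).
  lra.
Qed.

(** * The three ranges of [v] *)

Lemma sum_n_single (F : nat -> C) N : (1 <= N)%nat ->
  (forall d, (d <= N)%nat -> d <> 1%nat -> F d = 0) -> sum_n F N = F 1%nat.
Proof.
  intros hN H. induction N as [|N IH]; [lia|]. rewrite sum_Sn.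
  destruct (Nat.eq_dec N 0) as [->|hn].
  - rewrite sum_O, (H 0%nat) by lia. apply (plus_zero_l (G := C_AbelianMonoid)).
  - rewrite IH, (H (S N)) by (lia || (intros; apply H; lia)).
    apply (plus_zero_r (G := C_AbelianMonoid)).
Qed.

Lemma prime_mod_neq_0 (p d : nat) : prime (Z.of_nat p) -> (2 <= d < p)%nat -> (p mod d <> 0)%nat.
Proof.
  intros hp hd e. apply Nat.Lcm0.mod_divide in e as [k hk].
  assert (hdiv : (Z.of_nat d | Z.of_nat p)%Z) by (exists (Z.of_nat k); lia).
  destruct (prime_divisors _ hp _ hdiv) as [?|[?|[?|?]]]; lia.
Qed.

Lemma tau_prime p v : prime (Z.of_nat p) -> tau p v = Cplus 1 (cpow_i p v).
Proof.
  intros hp. assert (hp2 : (2 <= p)%nat) by (destruct hp; lia).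
  unfold tau. destruct p as [|p']; [lia|].
  rewrite sum_Sn, (sum_n_single _ p'); try lia.
  - rewrite Nat.mod_1_r, Nat.Div0.mod_same. simpl Nat.ltb. simpl Nat.eqb.
    replace (Nat.ltb 0 (S p')) with true by (symmetry; apply Nat.ltb_lt; lia).
    unfold cpow_i at 1. rewrite INR_1, ln_1, Rmult_0_r, cos_0, sin_0. reflexivity.
  - intros [|d'] hd hd1; [reflexivity|].
    replace (Nat.ltb 0 (S d')) with true by (symmetry; apply Nat.ltb_lt; lia).
    replace (Nat.eqb (S p' mod S d') 0) with false; [reflexivity|].
    symmetry. apply Nat.eqb_neq, prime_mod_neq_0; auto. lia.
Qed.

Lemma Cmod_tau_prime p v : prime (Z.of_nat p) ->
  Cmod (tau p v) = 2 * Rabs (cos (v * ln (INR p) / 2)).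
Proof.
  intros hp. rewrite tau_prime by auto. unfold Cmod, cpow_i. simpl fst. simpl snd.
  set (x := v * ln (INR p) / 2).
  replace (v * ln (INR p)) with (2 * x) by (unfold x; field).
  rewrite cos_2a_cos, sin_2a.
  replace ((1 + (2 * cos x * cos x - 1)) ^ 2 + (0 + 2 * sin x * cos x) ^ 2)
    with (Rsqr (2 * cos x)).
  - rewrite sqrt_Rsqr_abs, Rabs_mult, Rabs_pos_eq by lra. reflexivity.
  - pose proof (sin2_cos2 x). unfold Rsqr in *. nra.
Qed.

Lemma sum_abs_tau_eq v x :
  prime_sum (fun p => Cmod (tau p v) / INR p) x = prime_sum (fun n => tau_weight v (INR n)) x.
Proof.
  apply prime_sum_ext. intros n hn. rewrite Cmod_tau_prime by auto. reflexivity.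
Qed.

Section MainBound.

Variables (a : R) (r : nat) (T1 b : R) (s : nat) (T2 : R).
Hypothesis a_pos : 0 < a.
Hypothesis r_ge_2 : (2 <= r)%nat.
Hypothesis T1_ge_2 : 2 <= T1.
Hypothesis pi_li : forall t, T1 <= t -> Rabs (prime_pi t - li t) <= a * t / (ln t) ^ r.
Hypothesis b_pos : 0 < b.
Hypothesis mertens : forall t, T2 <= t ->
  prime_sum (fun p => / INR p) t <= ln (ln t) + MM_B + b / (ln t) ^ s.

Variables (q T x v : R).
Hypothesis q_ge_1 : 1 <= q.
Hypothesis T_ge : Rmax (exp q) (Rmax T1 T2) <= T.
Hypothesis T_le_x : T <= x.
Hypothesis v_bounds : 0 <= v <= 1.

Let S := prime_sum (fun n => tau_weight v (INR n)) x.
Let M := 2 * MM_B + 4 * a * zeta r / (2 * PI) ^ r + 14 * a / (ln T) ^ r + 2 * b / (ln T) ^ s.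

Lemma T_bounds : T1 <= T /\ T2 <= T /\ q <= ln T /\ ln T <= ln x.
Proof.
  pose proof (Rmax_l (exp q) (Rmax T1 T2)). pose proof (Rmax_r (exp q) (Rmax T1 T2)).
  pose proof (Rmax_l T1 T2). pose proof (Rmax_r T1 T2). pose proof (exp_pos q).
  repeat split; try lra.
  - rewrite <- (ln_exp q). apply ln_le; lra.
  - apply ln_le; lra.
Qed.

Lemma tau_weight_sum_le_mertens y : T2 <= y ->
  prime_sum (fun n => tau_weight v (INR n)) y <= 2 * (ln (ln y) + MM_B + b / (ln y) ^ s).
Proof.
  intros hy. apply Rle_trans with (prime_sum (fun n => 2 * / INR n) y).
  - apply prime_sum_le. intros n hn.
    assert (0 < INR n) by (apply lt_0_INR; destruct hn; lia).
    apply tau_weight_bounds; auto.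
  - rewrite !prime_sum_scal. apply Rmult_le_compat_l; [lra | apply mertens; auto].
Qed.

Lemma mertens_tail_le y : T <= y -> b / (ln y) ^ s <= b / (ln T) ^ s.
Proof.
  intros hy. destruct T_bounds as (? & ? & ? & _).
  apply div_pow_le; [lra | lra | apply ln_le; lra].
Qed.

Lemma zeta_term_nonneg : 0 <= 4 * a * zeta r / (2 * PI) ^ r.
Proof.
  pose proof (zeta_ge_1 r r_ge_2). pose proof PI_RGT_0.
  apply Rdiv_le_0_compat; [|apply pow_lt]; nra.
Qed.

Lemma sum_abs_tau_lt_trivial : S < M + 2 * ln (ln x).
Proof.
  destruct T_bounds as (? & ? & ? & ?).
  pose proof (tau_weight_sum_le_mertens x ltac:(lra)).
  pose proof (mertens_tail_le x T_le_x). pose proof zeta_term_nonneg.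
  assert (0 < 14 * a / ln T ^ r) by (apply Rdiv_lt_0_compat; [|apply pow_lt]; lra).
  unfold S, M. lra.
Qed.

Lemma sum_abs_tau_lt_split_at y : 0 < v -> T <= y -> y <= x ->
  S < M + 2 * ln (ln y) + 4 / PI * (ln (ln x) - ln (ln y)) + 4 * frak_m / (v * ln y).
Proof.
  intros hv hy hyx. destruct T_bounds as (? & ? & ? & ?).
  pose proof (tau_weight_sum_le_mertens y ltac:(lra)).
  pose proof (mertens_tail_le y hy).
  pose proof (tau_weight_sum_tail_le v a r T1 hv (proj2 v_bounds) a_pos T1_ge_2 pi_li r_ge_2
                T y x ltac:(lra) ltac:(lra) hy hyx).
  pose proof (boundary_terms_lt a (ln T) r a_pos ltac:(lra) r_ge_2).
  unfold S, M. lra.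
Qed.

Lemma sum_abs_tau_lt_middle_v : q / ln x <= v <= q / ln T ->
  S < M + (4 / PI * ln (ln x) - (2 - 4 / PI) * ln (v / q) + 4 * frak_m / q).
Proof.
  intros [h1 h2]. destruct T_bounds as (? & ? & ? & ?).
  assert (0 < q / ln x) by (apply Rdiv_lt_0_compat; lra).
  assert (hvT : v * ln T <= q).
  { replace q with (q / ln T * ln T) by (field; lra). apply Rmult_le_compat_r; lra. }
  assert (hvx : q <= v * ln x).
  { replace q with (q / ln x * ln x) by (field; lra). apply Rmult_le_compat_r; lra. }
  assert (hv : 0 < v) by lra.
  assert (hly : ln (exp (q / v)) = q / v) by apply ln_exp.
  assert (hTy : T <= exp (q / v)).
  { rewrite <- (exp_ln T) by lra. apply exp_le_exp.
    apply Rmult_le_reg_l with v; [lra|]. field_simplify; lra. }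
  assert (hyx : exp (q / v) <= x).
  { rewrite <- (exp_ln x) by lra. apply exp_le_exp.
    apply Rmult_le_reg_l with v; [lra|]. field_simplify; lra. }
  pose proof (sum_abs_tau_lt_split_at _ hv hTy hyx) as Hsplit. rewrite hly in Hsplit.
  replace (4 * frak_m / (v * (q / v))) with (4 * frak_m / q) in Hsplit by (field; lra).
  replace (ln (v / q)) with (- ln (q / v))
    by (rewrite <- ln_Rinv by (apply Rdiv_lt_0_compat; lra); f_equal; field; lra).
  lra.
Qed.

Lemma sum_abs_tau_lt_large_v : q / ln T <= v ->
  S < M + (4 / PI * ln (ln x) + 4 / PI * ln (v / q) + 2 * ln (ln T) + 4 * frak_m / q).
Proof.
  intros h. destruct T_bounds as (? & ? & ? & ?). pose proof PI_RGT_0.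
  assert (0 < q / ln T) by (apply Rdiv_lt_0_compat; lra).
  assert (hvT : q <= v * ln T).
  { replace q with (q / ln T * ln T) by (field; lra). apply Rmult_le_compat_r; lra. }
  assert (hv : 0 < v) by lra.
  pose proof (sum_abs_tau_lt_split_at T hv ltac:(lra) T_le_x).
  assert (4 * frak_m / (v * ln T) <= 4 * frak_m / q).
  { pose proof frak_m_nonneg. apply Rmult_le_compat_l; [lra|].
    apply Rinv_le_contravar; lra. }
  assert (0 <= ln (v / q) + ln (ln T)).
  { rewrite <- ln_mult, <- ln_1 by (try apply Rdiv_lt_0_compat; lra).
    apply ln_le; [lra|]. apply Rmult_le_reg_r with q; [lra|].
    field_simplify; lra. }
  assert (0 <= 4 / PI * (ln (v / q) + ln (ln T)))
    by (apply Rmult_le_pos; [left; apply Rdiv_lt_0_compat|]; lra).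
  lra.
Qed.

End MainBound.

Theorem lemma16
  (a : R) (r : nat) (T1 : R) (b : R) (s : nat) (T2 : R)
  (ha : 0 < a) (hr : (2 <= r)%nat) (hT1 : 2 <= T1)
  (hpi : forall t, T1 <= t -> Rabs (prime_pi t - li t) <= a * t / (ln t) ^ r)
  (hb : 0 < b) (hs : (1 <= s)%nat) (hT2 : 2 <= T2)
  (hmert : forall t, T2 <= t ->
     prime_sum (fun p => / INR p) t <= ln (ln t) + MM_B + b / (ln t) ^ s)
  (q T x v : R) (hq : 1 <= q)
  (hT : Rmax (exp q) (Rmax T1 T2) <= T) (hTx : T <= x) (hv : 0 <= v <= 1) :
  let S := prime_sum (fun p => Cmod (tau p v) / INR p) x in
  let M := 2 * MM_B + 4 * a * zeta r / (2 * PI) ^ r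
           + 14 * a / (ln T) ^ r + 2 * b / (ln T) ^ s in
  (v <= q / ln x -> S < M + 2 * ln (ln x)) /\
  (q / ln x <= v <= q / ln T ->
     S < M + (4 / PI * ln (ln x) - (2 - 4 / PI) * ln (v / q) + 4 * frak_m / q)) /\
  (q / ln T <= v ->
     S < M + (4 / PI * ln (ln x) + 4 / PI * ln (v / q) + 2 * ln (ln T) + 4 * frak_m / q)).
Proof.
  intros S M. unfold S, M. rewrite sum_abs_tau_eq.
  split; [|split]; intros hcase.
  - exact (sum_abs_tau_lt_trivial a r T1 b s T2 ha hr hT1 hb hmert q T x v hq hT hTx).
  - exact (sum_abs_tau_lt_middle_v a r T1 b s T2 ha hr hT1 hpi hb hmert q T x v
             hq hT hTx hv hcase).
  - exact (sum_abs_tau_lt_large_v a r T1 b s T2 ha hr hT1 hpi hb hmert q T x v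
             hq hT hTx hv hcase).
Qed.
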